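(* For $0\le p\le 1$ let $|\Psi_s\rangle=\cos\frac{\pi}{8}|000\rangle+\sin\frac{\pi}{8}|111\rangle$ and $$\rho_\chi(p,\pi/8)=p|\Psi_s\rangle\langle\Psi_s|+(1-p)\,|00\rangle\langle00|\otimes\tfrac{I_2}{2}.$$ Then the $3\times 9$ matrix $M$ with entries $M_{j,ik}=\mathrm{tr}[\rho_\chi(p,\pi/8)(\sigma_i\otimes\sigma_j\otimes\sigma_k)]$ has singular values $p,p,\frac{\sqrt2}{2}p$, and the maximal value of $|\mathrm{tr}(\mathcal{S}\rho_\chi(p,\pi/8))|$ over all Svetlichny operators $\mathcal{S}$ equals $4p$. In particular $\rho_\chi(p,\pi/8)$ does not violate the Svetlichny inequality for any $p\in[0,1]$.
   Context: $\sigma_1,\sigma_2,\sigma_3$ are the Pauli matrices, $I_2$ the $2\times2$ identity. For real unit vectors $\vec a,\vec a',\vec b,\vec b',\vec c,\vec c'\in\mathbb{R}^3$ let $A=\vec a\cdot\vec\sigma=\sum_k a_k\sigma_k$, and similarly $A',B,B',C,C'$. The Svetlichny operator is $$\mathcal{S}=A\otimes[(B+B')\otimes C+(B-B')\otimes C']+A'\otimes[(B-B')\otimes C-(B+B')\otimes C'],$$ and maxima are over all choices of the six unit vectors. A state violates the Svetlichny inequality if $|\mathrm{tr}(\mathcal{S}\rho)|>4$ for some such choice. *)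

From HB Require Import structures.
From mathcomp Require Import all_boot all_order all_algebra.
From mathcomp Require Import complex mxtens.
From mathcomp Require Import reals trigo.

Set Implicit Arguments.
Unset Strict Implicit.
Unset Printing Implicit Defensive.

Import Order.TTheory GRing.Theory Num.Theory.
Local Open Scope ring_scope.
Local Open Scope complex_scope.

Section Defs.
Variable R : realType.
Local Notation C := R[i].

Definition cR (x : R) : C := x +i* 0.

Definition adjmx m n (M : 'M[C]_(m, n)) : 'M[C]_(n, m) :=
  (map_mx (fun z : C => z^*%R) M)^T.

(* Pauli matrices sigma_1, sigma_2, sigma_3, indexed by 'I_3 (0 <-> 1, 1 <-> 2, 2 <-> 3) *)
Definition sigma1 : 'M[C]_2 :=
  \matrix_(i < 2, j < 2) (if i == j then 0 else 1).
Definition sigma2 : 'M[C]_2 :=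
  \matrix_(i < 2, j < 2)
    (if ((i : nat) == 0%N) && ((j : nat) == 1%N) then - 'i
     else if ((i : nat) == 1%N) && ((j : nat) == 0%N) then 'i else 0).
Definition sigma3 : 'M[C]_2 :=
  \matrix_(i < 2, j < 2)
    (if i == j then (if (i : nat) == 0%N then 1 else -1) else 0).
Definition pauli (k : 'I_3) : 'M[C]_2 :=
  match val k with 0%N => sigma1 | 1%N => sigma2 | _ => sigma3 end.

Definition dot_sigma (a : 'rV[R]_3) : 'M[C]_2 :=
  \sum_(k < 3) cR (a 0 k) *: pauli k.

Definition unit_vec (a : 'rV[R]_3) : Prop := \sum_(k < 3) a 0 k ^+ 2 = 1.

(* Three-qubit operators live in 'M_(2 * (2 * 2)), with X (x) Y (x) Z := X *t (Y *t Z). *)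
Definition svetlichny (a a' b b' c c' : 'rV[R]_3) : 'M[C]_(2 * (2 * 2)) :=
  let A := dot_sigma a in let A' := dot_sigma a' in
  let B := dot_sigma b in let B' := dot_sigma b' in
  let Cm := dot_sigma c in let C' := dot_sigma c' in
  A *t ((B + B') *t Cm + (B - B') *t C')
  + A' *t ((B - B') *t Cm - (B + B') *t C').

Definition ket0 : 'cV[C]_2 := \col_(i < 2) (if (i : nat) == 0%N then 1 else 0).
Definition ket1 : 'cV[C]_2 := \col_(i < 2) (if (i : nat) == 1%N then 1 else 0).

Definition psi_s : 'cV[C]_(2 * (2 * 2)) :=
  cR (cos (pi / 8)) *: (ket0 *t (ket0 *t ket0))
  + cR (sin (pi / 8)) *: (ket1 *t (ket1 *t ket1)).

Definition rho_chi (p : R) : 'M[C]_(2 * (2 * 2)) :=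
  cR p *: (psi_s *m adjmx psi_s)
  + cR (1 - p) *: ((ket0 *m adjmx ket0) *t ((ket0 *m adjmx ket0)
                     *t (cR (2^-1) *: (1%:M : 'M[C]_2)))).

(* The 3 x 9 correlation matrix M_{j, ik} = tr[rho (sigma_i (x) sigma_j (x) sigma_k)];
   the column index l : 'I_(3*3) encodes the pair (i, k) = mxtens_unindex l. *)
Definition corr_mx (rho : 'M[C]_(2 * (2 * 2))) : 'M[C]_(3, 3 * 3) :=
  \matrix_(j < 3, l < 3 * 3)
    \tr (rho *m (pauli (mxtens_unindex l).1
                  *t (pauli j *t pauli (mxtens_unindex l).2))).

(* Singular values of an m x n complex matrix M with m <= n: the list s
   (of length m, nonnegative entries) of the square roots of the eigenvalues
   of M M^dagger, counted with multiplicity, i.e. the characteristic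
   polynomial of M M^dagger is prod_{x in s} (X - x^2). *)
Definition singular_values m n (M : 'M[C]_(m, n)) (s : seq R) : Prop :=
  [/\ size s = m, all (fun x => 0 <= x) s &
      char_poly (M *m adjmx M) = \prod_(x <- s) ('X - (cR (x ^+ 2))%:P)].

End Defs.

(* Since the Pauli matrices are traceless, the noise term (1 - p)|00><00| (x) I/2 is
   invisible to every product a.sigma (x) u.sigma (x) v.sigma, and
   tr[rho_chi (a.sigma (x) u.sigma (x) v.sigma)] = p (sqrt 2 / 2) T(a, u, v) with the
   GHZ-type trilinear form T(a, u, v) = a_z u_z v_z + Re((a_x + i a_y)(u_x + i u_y)(v_x + i v_y)),
   because cos^2(pi/8) - sin^2(pi/8) = 2 cos(pi/8) sin(pi/8) = sqrt 2 / 2.  The Gram matrix of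
   the correlation matrix is then diag(p^2, p^2, p^2/2).
   The Svetlichny value is linear in u = b + b' and v = b - b', where |u|^2 + |v|^2 = 4; its
   coefficient vectors X = T(a, ., c) - T(a', ., c') and Y = T(a, ., c') + T(a', ., c) satisfy
   |X|^2 + |Y|^2 <= 8 by a parallelogram identity, so AM-GM gives |S| <= 4 sqrt 2, i.e.
   |tr(S rho_chi)| <= 4p, with equality for a = b = x, a' = b' = y, c, c' = (x -+ y)/sqrt 2. *)
From HB Require Import structures.
From mathcomp Require Import all_boot all_order all_algebra.
From mathcomp Require Import complex mxtens.
From mathcomp Require Import reals trigo.
From mathcomp Require Import ring lra.
Import Order.TTheory GRing.Theory Num.Theory.
Local Open Scope ring_scope.

Lemma sum2E (V : nmodType) (f : 'I_2 -> V) : \sum_(k < 2) f k = f 0 + f 1.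
Proof. by rewrite !big_ord_recl big_ord0 addr0; congr (_ + f _); apply: val_inj. Qed.

Lemma sum3E (V : nmodType) (f : 'I_3 -> V) : \sum_(k < 3) f k = f 0 + f 1 + f 2.
Proof.
by rewrite !big_ord_recl big_ord0 addr0 addrA; congr (_ + f _ + f _); apply: val_inj.
Qed.

Lemma sum_mxtens_unindex (V : nmodType) m n (f : 'I_m -> 'I_n -> V) :
  \sum_(l < m * n) f (mxtens_unindex l).1 (mxtens_unindex l).2 =
  \sum_(i < m) \sum_(k < n) f i k.
Proof.
rewrite pair_big; symmetry; apply: reindex => /=.
by exists (@mxtens_index m n) => l _; rewrite (mxtens_indexK, mxtens_unindexK).
Qed.

Section KroneckerLinear.
Context {K : pzRingType}.

Lemma tensmxDr m n p q (A : 'M[K]_(m, n)) (B D : 'M[K]_(p, q)) :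
  A *t (B + D) = A *t B + A *t D.
Proof. by apply/matrixP=> i j; rewrite !mxE mulrDr. Qed.

Lemma tensmxNr m n p q (A : 'M[K]_(m, n)) (B : 'M[K]_(p, q)) :
  A *t (- B) = - (A *t B).
Proof. by apply/matrixP=> i j; rewrite !mxE mulrN. Qed.

End KroneckerLinear.

Section KroneckerTrace.
Context {K : comNzRingType}.

Lemma mxtrace_tens m n (A : 'M[K]_m) (B : 'M[K]_n) : \tr (A *t B) = \tr A * \tr B.
Proof. by rewrite /mxtrace mulr_sum; apply: eq_bigr => k _; rewrite mxE. Qed.

Lemma mxtrace_tens3_mul m n q (X P : 'M[K]_m) (Y Q : 'M[K]_n) (Z S : 'M[K]_q) :
  \tr ((X *t (Y *t Z)) *m (P *t (Q *t S))) =
  \tr (X *m P) * (\tr (Y *m Q) * \tr (Z *m S)).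
Proof. by rewrite !tensmx_mul !mxtrace_tens. Qed.

Lemma tens3_mul_outer m n q (x : 'cV[K]_m) (y : 'cV[K]_n) (z : 'cV[K]_q)
    (x' : 'rV[K]_m) (y' : 'rV[K]_n) (z' : 'rV[K]_q) :
  @mulmx K (m * (n * q)) 1 (m * (n * q)) (x *t (y *t z)) (x' *t (y' *t z')) =
  (x *m x') *t ((y *m y') *t (z *m z')).
Proof.
rewrite (@tensmx_mul K m 1 (n * q) (1 * 1) m (n * q) x (y *t z) x' (y' *t z')).
by rewrite tensmx_mul.
Qed.

Lemma mxtrace_mul_delta {n} (X : 'M[K]_n) (i j : 'I_n) :
  \tr (X *m ((delta_mx i 0 : 'cV_n) *m (delta_mx 0 j : 'rV_n))) = X j i.
Proof.
rewrite mul_delta_mx /mxtrace (bigD1 j) //= big1 ?addr0.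
  rewrite mxE (bigD1 i) //= big1 ?addr0; first by rewrite !mxE !eqxx mulr1.
  by move=> k nki; rewrite mxE (negbTE nki) mulr0.
by move=> k nkj; rewrite mxE big1 // => l _; rewrite mxE (negbTE nkj) andbF mulr0.
Qed.

Lemma mxtrace_mul_lincomb n (T M N : 'M[K]_n) (a b : K) :
  \tr (T *m (a *: M + b *: N)) = a * \tr (T *m M) + b * \tr (T *m N).
Proof. by rewrite mulmxDr -!scalemxAr mxtraceD !mxtraceZ. Qed.

Lemma mxtrace_mul_outer_lincomb n (T : 'M[K]_n) (u v : 'cV_n) (w z : 'rV_n)
    (a b c d : K) :
  \tr (T *m ((a *: u + b *: v) *m (c *: w + d *: z))) =
  a * c * \tr (T *m (u *m w)) + a * d * \tr (T *m (u *m z))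
  + b * c * \tr (T *m (v *m w)) + b * d * \tr (T *m (v *m z)).
Proof.
by rewrite !mulmxDl !mulmxDr -!scalemxAl -!scalemxAr !mxtraceD !mxtraceZ; ring.
Qed.

Lemma mxtrace_tens3_mul_ghz n (X Y Z : 'M[K]_n) (i j : 'I_n) (a b c d : K) :
  let e k : 'cV[K]_n := delta_mx k 0 in
  let e' k : 'rV[K]_n := delta_mx 0 k in
  \tr ((X *t (Y *t Z)) *m
       ((a *: (e i *t (e i *t e i)) + b *: (e j *t (e j *t e j))) *m
        (c *: (e' i *t (e' i *t e' i)) + d *: (e' j *t (e' j *t e' j))))) =
  a * c * (X i i * (Y i i * Z i i)) + a * d * (X j i * (Y j i * Z j i))
  + b * c * (X i j * (Y i j * Z i j)) + b * d * (X j j * (Y j j * Z j j)).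
Proof.
rewrite /= mxtrace_mul_outer_lincomb !tens3_mul_outer !mxtrace_tens3_mul.
by rewrite !mxtrace_mul_delta.
Qed.

Lemma mxtrace_tens3_mul_proj n (X Y Z : 'M[K]_n) (i : 'I_n) (h : K) :
  let P : 'M[K]_n := (delta_mx i 0 : 'cV_n) *m (delta_mx 0 i : 'rV_n) in
  \tr ((X *t (Y *t Z)) *m (P *t (P *t (h *: 1%:M)))) = X i i * (Y i i * (h * \tr Z)).
Proof.
by rewrite /= mxtrace_tens3_mul !mxtrace_mul_delta -scalemxAr mulmx1 mxtraceZ.
Qed.

End KroneckerTrace.

Section Trigonometry.
Context {R : realType}.

Lemma sin_cos_piquarter : sin (pi / 4) = cos (pi / 4) :> R.
Proof. by rewrite -cosBpihalf -cosN opprB; congr cos; lra. Qed.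

Lemma cos_piquarter : cos (pi / 4) = Num.sqrt 2 / 2 :> R.
Proof.
have cos_gt0 : 0 < cos (pi / 4) :> R.
  by have := @pi_gt0 R => pi_gt0; apply: cos_gt0_pihalf; apply/andP; split; lra.
apply/eqP; rewrite -(@eqrXn2 _ 2) ?(ltW cos_gt0) ?divr_ge0 ?sqrtr_ge0 //.
have := cos2Dsin2 (pi / 4 : R).
rewrite sin_cos_piquarter expr_div_n sqr_sqrtr ?ler0n // => cos2.
by apply/eqP; lra.
Qed.

Lemma sin_piquarter : sin (pi / 4) = Num.sqrt 2 / 2 :> R.
Proof. by rewrite sin_cos_piquarter cos_piquarter. Qed.

Lemma sqr_sqrt2_half : (Num.sqrt 2 / 2 : R) ^+ 2 = 2^-1.
Proof. by rewrite expr_div_n sqr_sqrtr ?ler0n //; field. Qed.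

End Trigonometry.

Section GhzCorrelation.
Context {R : realType}.

(* Coordinates 0, 1, 2 are the x, y, z components. *)
Definition ghz_corr (a u c : 'rV[R]_3) : R :=
  a 0 2 * u 0 2 * c 0 2
  + (a 0 0 * u 0 0 * c 0 0 - a 0 0 * u 0 1 * c 0 1
     - a 0 1 * u 0 0 * c 0 1 - a 0 1 * u 0 1 * c 0 0).

Definition ghz_contract (a c : 'rV[R]_3) : 'rV[R]_3 :=
  \row_j ghz_corr a (delta_mx 0 j) c.

Lemma ghz_corr_contract (a u c : 'rV[R]_3) :
  ghz_corr a u c = \sum_(j < 3) u 0 j * ghz_contract a c 0 j.
Proof. by rewrite sum3E !mxE /ghz_corr !mxE /=; ring. Qed.

Definition svetlichny_value (a a' b b' c c' : 'rV[R]_3) : R :=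
  ghz_corr a (b + b') c + ghz_corr a (b - b') c'
  + ghz_corr a' (b - b') c - ghz_corr a' (b + b') c'.

Lemma svetlichny_value_contract (a a' b b' c c' : 'rV[R]_3) :
  svetlichny_value a a' b b' c c' =
  \sum_(j < 3) (b + b') 0 j * (ghz_contract a c - ghz_contract a' c') 0 j
  + \sum_(j < 3) (b - b') 0 j * (ghz_contract a c' + ghz_contract a' c) 0 j.
Proof.
rewrite /svetlichny_value !ghz_corr_contract -!big_split -sumrB /=.
by apply: eq_bigr => j _; rewrite !mxE; ring.
Qed.

Lemma sum_mul_le_sqr {n} (u x : 'rV[R]_n) (t : R) :
  2 * t * (\sum_(j < n) u 0 j * x 0 j) <=
  \sum_(j < n) u 0 j ^+ 2 + t ^+ 2 * \sum_(j < n) x 0 j ^+ 2.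
Proof.
rewrite -subr_ge0 !mulr_sumr -big_split -sumrB /= sumr_ge0 // => j _.
by rewrite (_ : _ - _ = (u 0 j - t * x 0 j) ^+ 2) ?sqr_ge0 //; ring.
Qed.

Lemma sum_sqr_parallelogram {n} (b b' : 'rV[R]_n) :
  \sum_(j < n) (b + b') 0 j ^+ 2 + \sum_(j < n) (b - b') 0 j ^+ 2 =
  2 * (\sum_(j < n) b 0 j ^+ 2 + \sum_(j < n) b' 0 j ^+ 2).
Proof. by rewrite -!big_split mulr_sumr /=; apply: eq_bigr => j _; rewrite !mxE; ring. Qed.

(* With A_k = x_k + i y_k and G_k = z_k + i w_k the left-hand side is
   |A_0 G_0 - A_1 G_1|^2 + |A_0 G_1 + A_1 G_0|^2 + |A_2 G_2|^2; the first two of the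
   complementary squares below come from the parallelogram law. *)
Lemma ghz_contract_bound (a a' c c' : 'rV[R]_3) :
  \sum_(j < 3) (ghz_contract a c - ghz_contract a' c') 0 j ^+ 2
  + \sum_(j < 3) (ghz_contract a c' + ghz_contract a' c) 0 j ^+ 2 <=
  2 * ((\sum_(j < 3) a 0 j ^+ 2 + \sum_(j < 3) a' 0 j ^+ 2)
       * (\sum_(j < 3) c 0 j ^+ 2 + \sum_(j < 3) c' 0 j ^+ 2)).
Proof.
rewrite !sum3E !mxE /ghz_corr !mxE /=.
move: (a 0 0) (a 0 1) (a 0 2) (a' 0 0) (a' 0 1) (a' 0 2) => x0 x1 x2 y0 y1 y2.
move: (c 0 0) (c 0 1) (c 0 2) (c' 0 0) (c' 0 1) (c' 0 2) => z0 z1 z2 w0 w1 w2.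
rewrite -subr_ge0 (_ : _ - _ =
    (x0 * z0 - y0 * w0 + x1 * z1 - y1 * w1) ^+ 2
  + (x0 * w0 + y0 * z0 + x1 * w1 + y1 * z1) ^+ 2
  + (x0 * z1 - y0 * w1 - x1 * z0 + y1 * w0) ^+ 2
  + (x0 * w1 + y0 * z1 - x1 * w0 - y1 * z0) ^+ 2
  + 2 * ((x2 ^+ 2 + y2 ^+ 2) * (z0 ^+ 2 + z1 ^+ 2 + w0 ^+ 2 + w1 ^+ 2))
  + 2 * ((x0 ^+ 2 + x1 ^+ 2 + y0 ^+ 2 + y1 ^+ 2) * (z2 ^+ 2 + w2 ^+ 2))
  + (x2 ^+ 2 + y2 ^+ 2) * (z2 ^+ 2 + w2 ^+ 2)); last by ring.
by do ![exact: sqr_ge0 | apply: addr_ge0 | apply: mulr_ge0].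
Qed.

Lemma svetlichny_value_bound (a a' b b' c c' : 'rV[R]_3) :
  unit_vec a -> unit_vec a' -> unit_vec b -> unit_vec b' -> unit_vec c -> unit_vec c' ->
  `|Num.sqrt 2 / 2 * svetlichny_value a a' b b' c c'| <= 4.
Proof.
rewrite /unit_vec => ha ha' hb hb' hc hc'.
have bound (t : R) : t ^+ 2 = 2^-1 -> 2 * t * svetlichny_value a a' b b' c c' <= 8.
  move=> t2; rewrite svetlichny_value_contract mulrDr.
  apply: le_trans (lerD (sum_mul_le_sqr _ _ t) (sum_mul_le_sqr _ _ t)) _.
  have := sum_sqr_parallelogram b b'; have := ghz_contract_bound a a' c c'.
  by rewrite ha ha' hb hb' hc hc' t2 => hXY huv; lra.
have := bound _ sqr_sqrt2_half; have := bound _ (etrans (sqrrN _) sqr_sqrt2_half).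
by rewrite ler_norml; lra.
Qed.

Lemma svetlichny_value_attained : exists a a' b b' c c' : 'rV[R]_3,
  unit_vec a /\ unit_vec a' /\ unit_vec b /\ unit_vec b' /\ unit_vec c /\ unit_vec c' /\
  Num.sqrt 2 / 2 * svetlichny_value a a' b b' c c' = 4.
Proof.
pose x : 'rV[R]_3 := delta_mx 0 0; pose y : 'rV[R]_3 := delta_mx 0 1.
exists x, y, x, y, (Num.sqrt 2 / 2 *: (x - y)), (Num.sqrt 2 / 2 *: (x + y)).
rewrite /unit_vec /svetlichny_value /ghz_corr !sum3E !mxE /=.
have := @sqr_sqrt2_half R; set t := Num.sqrt 2 / 2 => t2.
by do !split; nra.
Qed.

End GhzCorrelation.

Section ComplexMatrices.
Context {R : realType}.
Local Notation C := R[i].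
Local Open Scope complex_scope.

Lemma cRD (x y : R) : cR (x + y) = cR x + cR y.
Proof. by rewrite /cR; simpc. Qed.

Lemma cRN (x : R) : cR (- x) = - cR x.
Proof. by rewrite /cR; simpc. Qed.

Lemma cRM (x y : R) : cR (x * y) = cR x * cR y.
Proof. by rewrite /cR; simpc. Qed.

Lemma cR_nat n : cR n%:R = n%:R :> C.
Proof. exact: (rmorph_nat (real_complex R)). Qed.

Lemma cR_sum (I : finType) (F : I -> R) : cR (\sum_i F i) = \sum_i cR (F i).
Proof. exact: (rmorph_sum (real_complex R)). Qed.

Lemma conj_cR (x : R) : (cR x)^*%R = cR x.
Proof. exact: conjc_real. Qed.

Lemma normr_cR (x : R) : `|cR x| = cR `|x|.
Proof. by rewrite /cR; simpc; rewrite expr0n /= addr0 sqrtr_sqr. Qed.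

Lemma adjmxE m n (A : 'M[C]_(m, n)) i j : adjmx A i j = (A j i)^*%R.
Proof. by rewrite !mxE. Qed.

Lemma adjmxD m n (A B : 'M[C]_(m, n)) : adjmx (A + B) = adjmx A + adjmx B.
Proof. by apply/matrixP=> i j; rewrite !mxE rmorphD. Qed.

Lemma adjmxZ m n (z : C) (A : 'M[C]_(m, n)) : adjmx (z *: A) = z^*%R *: adjmx A.
Proof. by apply/matrixP=> i j; rewrite !mxE rmorphM. Qed.

Lemma adjmx_tens_col m n (u : 'cV[C]_m) (v : 'cV[C]_n) :
  adjmx (u *t v : 'cV_(m * n)) = adjmx u *t adjmx v.
Proof. by apply/matrixP=> i j; rewrite !mxE rmorphM. Qed.

Lemma adjmx_delta m n (i : 'I_m) (j : 'I_n) :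
  adjmx (delta_mx i j : 'M[C]_(m, n)) = delta_mx j i.
Proof. by apply/matrixP=> k l; rewrite !mxE rmorph_nat andbC. Qed.

Lemma ket0E : ket0 R = delta_mx 0 0.
Proof. by apply/matrixP=> i j; rewrite !mxE ord1 eqxx andbT; case: i => [[|[|]]]. Qed.

Lemma ket1E : ket1 R = delta_mx 1 0.
Proof. by apply/matrixP=> i j; rewrite !mxE ord1 eqxx andbT; case: i => [[|[|]]]. Qed.

Lemma dot_sigma00 (a : 'rV[R]_3) : dot_sigma a 0 0 = cR (a 0 2).
Proof. by rewrite /dot_sigma summxE sum3E !mxE /= /cR; simpc. Qed.

Lemma dot_sigma11 (a : 'rV[R]_3) : dot_sigma a 1 1 = - cR (a 0 2).
Proof. by rewrite /dot_sigma summxE sum3E !mxE /= /cR; simpc. Qed.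

Lemma dot_sigma10 (a : 'rV[R]_3) : dot_sigma a 1 0 = a 0 0 +i* a 0 1.
Proof. by rewrite /dot_sigma summxE sum3E !mxE /= /cR; simpc. Qed.

Lemma dot_sigma01 (a : 'rV[R]_3) : dot_sigma a 0 1 = a 0 0 +i* - a 0 1.
Proof. by rewrite /dot_sigma summxE sum3E !mxE /= /cR; simpc. Qed.

Definition dot_sigmaE := (dot_sigma00, dot_sigma11, dot_sigma10, dot_sigma01).

Lemma mxtrace_dot_sigma (a : 'rV[R]_3) : \tr (dot_sigma a) = 0.
Proof. by rewrite /mxtrace sum2E dot_sigma00 dot_sigma11 addrN. Qed.

Lemma dot_sigmaD (b b' : 'rV[R]_3) : dot_sigma (b + b') = dot_sigma b + dot_sigma b'.
Proof. by rewrite /dot_sigma -big_split; apply: eq_bigr => k _; rewrite mxE cRD scalerDl. Qed.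

Lemma dot_sigmaB (b b' : 'rV[R]_3) : dot_sigma (b - b') = dot_sigma b - dot_sigma b'.
Proof.
rewrite /dot_sigma -sumrB; apply: eq_bigr => k _.
by rewrite !mxE cRD cRN scalerDl scaleNr.
Qed.

Lemma pauliE (k : 'I_3) : pauli R k = dot_sigma (delta_mx 0 k).
Proof.
rewrite /dot_sigma sum3E !mxE !eqxx /=.
by case: k => [[|[|[|//]]] ?]; rewrite /pauli /= !scale0r ?add0r ?addr0 scale1r.
Qed.

End ComplexMatrices.

Section RhoChi.
Context {R : realType}.
Local Notation C := R[i].
Local Open Scope complex_scope.

Lemma mxtrace_tens3_rho_chi (p : R) (X Y Z : 'M[C]_2) :
  \tr ((X *t (Y *t Z)) *m rho_chi p) =
  cR p * (cR (cos (pi / 8) * cos (pi / 8)) * (X 0 0 * (Y 0 0 * Z 0 0))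
          + cR (cos (pi / 8) * sin (pi / 8))
            * (X 1 0 * (Y 1 0 * Z 1 0) + X 0 1 * (Y 0 1 * Z 0 1))
          + cR (sin (pi / 8) * sin (pi / 8)) * (X 1 1 * (Y 1 1 * Z 1 1)))
  + cR (1 - p) * (X 0 0 * (Y 0 0 * (cR 2^-1 * \tr Z))).
Proof.
rewrite /rho_chi mxtrace_mul_lincomb /psi_s adjmxD !adjmxZ !adjmx_tens_col !conj_cR.
rewrite ket0E ket1E !adjmx_delta mxtrace_tens3_mul_ghz mxtrace_tens3_mul_proj !cRM.
by ring.
Qed.

(* The cast puts the product in the canonical ring structure of [C], as in
   [svetlichny] and [corr_mx]; otherwise matching against those terms is very slow. *)
Lemma mxtrace_dot_sigma3_rho_chi (p : R) (a u v : 'rV[R]_3) :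
  \tr ((dot_sigma a *t (dot_sigma u *t dot_sigma v) : 'M[C]_(2 * (2 * 2))) *m rho_chi p) =
  cR (p * (Num.sqrt 2 / 2 * ghz_corr a u v)).
Proof.
have pi_quarter : pi / 4 = pi / 8 + pi / 8 :> R by lra.
rewrite mxtrace_tens3_rho_chi !dot_sigmaE mxtrace_dot_sigma /ghz_corr [in RHS]mulrDr.
rewrite -{1}cos_piquarter -sin_piquarter pi_quarter cosD sinD /cR.
by simpc; congr (_ +i* _); ring.
Qed.

Lemma mxtrace_svetlichny_rho_chi (p : R) (a a' b b' c c' : 'rV[R]_3) :
  \tr (svetlichny a a' b b' c c' *m rho_chi p) =
  cR (p * (Num.sqrt 2 / 2 * svetlichny_value a a' b b' c c')).
Proof.
rewrite /svetlichny -dot_sigmaD -dot_sigmaB !tensmxDr tensmxNr.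
rewrite !mulmxDl mulNmx !mxtraceD linearN /=.
rewrite (_ : cR _ = cR (p * (Num.sqrt 2 / 2 * ghz_corr a (b + b') c))
                    + cR (p * (Num.sqrt 2 / 2 * ghz_corr a (b - b') c'))
                    + (cR (p * (Num.sqrt 2 / 2 * ghz_corr a' (b - b') c))
                       - cR (p * (Num.sqrt 2 / 2 * ghz_corr a' (b + b') c')))); last first.
  by rewrite -cRN -!cRD /svetlichny_value; congr cR; ring.
(* [congr] rather than [rewrite]: rewriting would compare the four traces up to
   conversion, which takes minutes. *)
by congr (_ + _ + (_ - _)); apply: mxtrace_dot_sigma3_rho_chi.
Qed.

Lemma normr_mxtrace_svetlichny_rho_chi (p : R) (a a' b b' c c' : 'rV[R]_3) :
  0 <= p ->
  `|\tr (svetlichny a a' b b' c c' *m rho_chi p)| =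
  cR (p * `|Num.sqrt 2 / 2 * svetlichny_value a a' b b' c c'|).
Proof.
by move=> p_ge0; rewrite mxtrace_svetlichny_rho_chi normr_cR normrM (ger0_norm p_ge0).
Qed.

End RhoChi.

Section SingularValues.
Context {R : realType}.
Local Notation e k := (delta_mx 0 k : 'rV[R]_3).

Lemma ghz_corr_gram (j j' : 'I_3) :
  \sum_(i < 3) \sum_(k < 3) ghz_corr (e i) (e j) (e k) * ghz_corr (e i) (e j') (e k) =
  if j == j' then (if j == 2 then 1 else 2) else 0.
Proof.
rewrite !sum3E /ghz_corr !mxE.
by case: j j' => [[|[|[|//]]] ?] [[|[|[|//]]] ?] /=; ring.
Qed.

Lemma corr_mx_rho_chiE (p : R) j l :
  corr_mx (rho_chi p) j l =
  cR (p * (Num.sqrt 2 / 2 *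
       ghz_corr (e (mxtens_unindex l).1) (e j) (e (mxtens_unindex l).2))).
Proof. by rewrite mxE mxtrace_mulC !pauliE mxtrace_dot_sigma3_rho_chi. Qed.

Lemma corr_mx_rho_chi_gram (p : R) j j' :
  (corr_mx (rho_chi p) *m adjmx (corr_mx (rho_chi p))) j j' =
  cR ((p * (Num.sqrt 2 / 2)) ^+ 2 * if j == j' then (if j == 2 then 1 else 2) else 0).
Proof.
rewrite mxE -ghz_corr_gram -sum_mxtens_unindex mulr_sumr cR_sum.
apply: eq_bigr => l _; rewrite adjmxE !corr_mx_rho_chiE conj_cR -cRM.
by congr cR; ring.
Qed.

Lemma singular_values_corr_mx_rho_chi (p : R) : 0 <= p ->
  singular_values (corr_mx (rho_chi p)) [:: p; p; Num.sqrt 2 / 2 * p].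
Proof.
move=> p_ge0; split => //.
  by rewrite /= p_ge0 mulr_ge0 // divr_ge0 ?sqrtr_ge0.
rewrite char_poly_trig; last first.
  apply/is_trig_mxP => i j lt_ij.
  by rewrite corr_mx_rho_chi_gram -val_eqE (ltn_eqF lt_ij) mulr0.
rewrite !big_ord_recl big_ord0 !big_cons big_nil !corr_mx_rho_chi_gram /=.
have -> : (p * (Num.sqrt 2 / 2)) ^+ 2 * 2 = p ^+ 2.
  by rewrite exprMn sqr_sqrt2_half; field.
by rewrite !mulr1 [p * _]mulrC.
Qed.

End SingularValues.

Theorem mainTheorem2 (R : realType) (p : R) (hp : 0 <= p <= 1) :
  singular_values (corr_mx (rho_chi p))
    [:: p; p; Num.sqrt 2 / 2 * p]
  /\ (forall a a' b b' c c' : 'rV[R]_3,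
        unit_vec a -> unit_vec a' -> unit_vec b -> unit_vec b' ->
        unit_vec c -> unit_vec c' ->
        `| \tr (svetlichny a a' b b' c c' *m rho_chi p) | <= cR (4 * p))
  /\ (exists a a' b b' c c' : 'rV[R]_3,
        unit_vec a /\ unit_vec a' /\ unit_vec b /\ unit_vec b' /\
        unit_vec c /\ unit_vec c' /\
        `| \tr (svetlichny a a' b b' c c' *m rho_chi p) | = cR (4 * p))
  /\ (forall a a' b b' c c' : 'rV[R]_3,
        unit_vec a -> unit_vec a' -> unit_vec b -> unit_vec b' ->
        unit_vec c -> unit_vec c' ->
        `| \tr (svetlichny a a' b b' c c' *m rho_chi p) | <= 4).
Proof.
case/andP: hp => p_ge0 p_le1.
have bound a a' b b' c c' : unit_vec a -> unit_vec a' -> unit_vec b -> unit_vec b' ->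
    unit_vec c -> unit_vec c' ->
    `| \tr (svetlichny a a' b b' c c' *m rho_chi p) | <= cR (4 * p).
  move=> ha ha' hb hb' hc hc'.
  rewrite normr_mxtrace_svetlichny_rho_chi // lecR [4 * p]mulrC ler_wpM2l //.
  exact: svetlichny_value_bound.
split; first exact: singular_values_corr_mx_rho_chi.
split; first exact: bound.
split.
  have [a [a' [b [b' [c [c' [ha [ha' [hb [hb' [hc [hc' value4]]]]]]]]]]]] :=
    @svetlichny_value_attained R.
  exists a, a', b, b', c, c'; do !split => //.
  by rewrite normr_mxtrace_svetlichny_rho_chi // value4 ger0_norm // mulrC.
move=> a a' b b' c c' ha ha' hb hb' hc hc'.
apply: le_trans (bound _ _ _ _ _ _ ha ha' hb hb' hc hc') _.
by rewrite -cR_nat lecR; lra.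
Qed.
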